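(* Let $N,T\ge1$, $\boldsymbol E\in\mathbb{C}^{N\times T}$, $H(x,\boldsymbol y)=\|\boldsymbol E-\boldsymbol a(x)\boldsymbol y^H\|_F^2$, and let $L:\mathbb C^T\to(0,\infty)$ be such that Assumption A holds. Let $\{\boldsymbol z^k\}=\{(x^k,\boldsymbol y^k)\}$ be generated by the cubic-regularized alternating scheme from $\boldsymbol z^0$, and assume this sequence is bounded. Let $\omega(\boldsymbol z^0)$ be the set of all $\bar{\boldsymbol z}\in\mathbb R\times\mathbb C^T$ for which there is an increasing sequence of integers $\{k_l\}$ with $\boldsymbol z^{k_l}\to\bar{\boldsymbol z}$. Then: (i) $\omega(\boldsymbol z^0)$ is nonempty and $\omega(\boldsymbol z^0)\subseteq\operatorname{crit}H:=\{\boldsymbol z:\nabla_{\boldsymbol z}H(\boldsymbol z)=0\}$; (ii) $\lim_{k\to\infty}\operatorname{dist}(\boldsymbol z^k,\omega(\boldsymbol z^0))=0$.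
   Context: Steering vector: $\boldsymbol a(x)=\frac{1}{\sqrt N}[1,e^{jx},\dots,e^{j(N-1)x}]^T$ for $x\in\mathbb R$. Cubic-regularized alternating scheme: given $H:\mathbb{R}\times\mathbb{C}^T\to\mathbb{R}$, a function $L:\mathbb{C}^T\to(0,\infty)$ and an initial point $(x^0,\boldsymbol y^0)$, for $k\ge0$ define $$\xi_k(x)=\partial_x H(x^k,\boldsymbol y^k)(x-x^k)+\tfrac12\,\partial^2_{xx}H(x^k,\boldsymbol y^k)(x-x^k)^2+\tfrac{L(\boldsymbol y^k)}{6}|x-x^k|^3,$$ $$x^{k+1}\in\arg\min_{x\in\mathbb R}\xi_k(x),\qquad \boldsymbol y^{k+1}\in\arg\min_{\boldsymbol y\in\mathbb{C}^T}H(x^{k+1},\boldsymbol y),$$ and write $\boldsymbol z^k=(x^k,\boldsymbol y^k)$. Assumption A: (i) $H$ is bounded below. (ii) For every fixed $\boldsymbol y$, $x\mapsto H(x,\boldsymbol y)$ is twice continuously differentiable with $|\partial^2_{xx}H(x_1,\boldsymbol y)-\partial^2_{xx}H(x_2,\boldsymbol y)|\le L(\boldsymbol y)|x_1-x_2|$. (iii) There is $\nu>0$ such that for every fixed $x$, $\boldsymbol y\mapsto H(x,\boldsymbol y)-\frac{\nu}{2}\|\boldsymbol y\|^2$ is convex on $\mathbb C^T\cong\mathbb R^{2T}$. (iv) There exist $0<\lambda^-\le\lambda^+$ with $\lambda^-\le L(\boldsymbol y^k)\le\lambda^+$ for all $k$. $\nabla_{\boldsymbol z}H=(\partial_xH,\nabla_{\boldsymbol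 y}H)$ with $\nabla_{\boldsymbol y}$ the Wirtinger gradient with respect to $\boldsymbol y$; $\operatorname{dist}(\boldsymbol z,S)=\inf_{\boldsymbol s\in S}\|\boldsymbol z-\boldsymbol s\|$. *)

From Stdlib Require Import Reals.
From Coquelicot Require Import Coquelicot.
From mathcomp Require Import ssreflect ssrbool eqtype ssrnat fintype bigop.

Open Scope R_scope.

Definition cvec (T : nat) := 'I_T -> C.

(* steering vector a(x) = 1/sqrt N [1, e^{jx}, ..., e^{j(N-1)x}]^T *)
Definition steer (N : nat) (x : R) : cvec N :=
  fun n => ((cos (INR n * x)) / sqrt (INR N), (sin (INR n * x)) / sqrt (INR N)).

Definition Hfun (N T : nat) (E : 'I_N -> 'I_T -> C) (x : R) (y : cvec T) : R :=
  \big[Rplus/R0]_(n < N) \big[Rplus/R0]_(t < T)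
     (Cmod (Cminus (E n t) (Cmult (steer N x n) (Cconj (y t))))) ^ 2.

Definition cvnorm2 (T : nat) (y : cvec T) : R :=
  \big[Rplus/R0]_(t < T) (Cmod (y t)) ^ 2.

Definition znorm (T : nat) (z : R * cvec T) : R :=
  sqrt ((fst z) ^ 2 + cvnorm2 T (snd z)).

Definition zsub (T : nat) (z w : R * cvec T) : R * cvec T :=
  (fst z - fst w, fun t => Cminus (snd z t) (snd w t)).

Definition cvcomb (T : nat) (th : R) (y1 y2 : cvec T) : cvec T :=
  fun t => Cplus (Cmult (RtoC th) (y1 t)) (Cmult (RtoC (1 - th)) (y2 t)).

Definition convex_cv (T : nat) (f : cvec T -> R) : Prop :=
  forall (y1 y2 : cvec T) (th : R), 0 <= th <= 1 ->
    f (cvcomb T th y1 y2) <= th * f y1 + (1 - th) * f y2.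

Definition cvupd (T : nat) (y : cvec T) (t : 'I_T) (c : C) : cvec T :=
  fun t' => if t' == t then Cplus (y t') c else y t'.

Definition dxH (N T : nat) E (x : R) (y : cvec T) : R :=
  Derive (fun s => Hfun N T E s y) x.
Definition dxxH (N T : nat) E (x : R) (y : cvec T) : R :=
  Derive (fun s => dxH N T E s y) x.

(* Wirtinger gradient w.r.t. y (conjugate derivative):
   (grad_y H)_t = dH/d(conj y_t) = 1/2 (dH/du_t + j dH/dv_t),  y_t = u_t + j v_t *)
Definition wirt_grad (N T : nat) E (x : R) (y : cvec T) : cvec T :=
  fun t =>
    ( / 2 * Derive (fun s => Hfun N T E x (cvupd T y t (RtoC s))) 0,
      / 2 * Derive (fun s => Hfun N T E x (cvupd T y t (0, s))) 0 ).

Definition critH (N T : nat) E (z : R * cvec T) : Prop :=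
  dxH N T E (fst z) (snd z) = 0 /\
  forall t, wirt_grad N T E (fst z) (snd z) t = RtoC 0.

Definition xi (N T : nat) E (L : cvec T -> R) (xk : R) (yk : cvec T) (x : R) : R :=
  dxH N T E xk yk * (x - xk) + / 2 * dxxH N T E xk yk * (x - xk) ^ 2
  + L yk / 6 * (Rabs (x - xk)) ^ 3.

Definition omega_set (T : nat) (z : nat -> R * cvec T) (zb : R * cvec T) : Prop :=
  exists k : nat -> nat, (forall l, (k l < k (S l))%nat) /\
    is_lim_seq (fun l => znorm T (zsub T (z (k l)) zb)) 0.

Definition zdist (T : nat) (z : R * cvec T) (Sset : R * cvec T -> Prop) : Rbar :=
  Glb_Rbar (fun r => exists s, Sset s /\ r = znorm T (zsub T z s)).

(* With lp bounding L (y k), Taylor's formula with a Lipschitz second derivative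
   bounds the cubic model from both sides, which yields the descent inequality
   H (z (k+1)) <= H (x k + s, y k) + lp/3 |s|^3 for every s.  Taking s = 0, H (z k)
   is nonincreasing, so by continuity H (zb) <= H (z m) for every limit point zb and
   every m.  Passing to the limit along a subsequence converging to zb gives
   H (zb) <= H (xb + s, yb) + lp/3 |s|^3 and H (zb) <= H (xb, w): xb minimises
   H (., yb) up to a cubic term and yb minimises H (xb, .), so both partial gradients
   vanish.  Nonemptiness of the limit set and dist (z k, limit set) -> 0 hold for
   every bounded sequence, by Bolzano-Weierstrass. *)

From Stdlib Require Import Reals Lra ClassicalEpsilon Classical FunctionalExtensionality.
From Coquelicot Require Import Coquelicot.
From mathcomp Require Import ssreflect ssrbool eqtype ssrnat fintype bigop seq.
Open Scope R_scope.

Definition strictly_increasing (phi : nat -> nat) := forall n, (phi n < phi n.+1)%nat.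

Lemma strictly_increasing_ge phi : strictly_increasing phi -> forall n, (n <= phi n)%nat.
Proof. by move=> Hphi; elim=> [|n IH] //; apply: leq_ltn_trans (Hphi n). Qed.

Lemma strictly_increasing_comp phi psi :
  strictly_increasing phi -> strictly_increasing psi -> strictly_increasing (fun n => phi (psi n)).
Proof. by move=> Hphi Hpsi n; apply: (homo_ltn ltn_trans Hphi (Hpsi n)). Qed.

Lemma is_lim_seq_subseq_incr u l phi :
  strictly_increasing phi -> is_lim_seq u l -> is_lim_seq (fun n => u (phi n)) l.
Proof. by move=> Hphi; apply: is_lim_seq_subseq; apply: eventually_subseq => n; apply/ltP. Qed.

Lemma strictly_increasing_choice (P : nat -> nat -> Prop) :
  (forall n M, exists k, (M <= k)%nat /\ P n k) ->
  exists phi, strictly_increasing phi /\ forall n, P n (phi n).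
Proof.
move=> HP.
have [f Hf] : exists f : nat -> nat -> nat, forall n M, (M <= f n M)%nat /\ P n (f n M).
  exists (fun n M => proj1_sig (constructive_indefinite_description _ (HP n M))).
  by move=> n M; case: constructive_indefinite_description.
pose fix phi n := if n is m.+1 then f n (phi m).+1 else f 0%nat 0%nat.
exists phi; split => [n|[|n]]; [exact: (proj1 (Hf _ _)) | exact: (proj2 (Hf _ _))..].
Qed.

Lemma is_lim_seq_of_dist_bound u v l :
  (forall n, Rabs (u n - l) <= v n) -> is_lim_seq v 0 -> is_lim_seq u l.
Proof.
move=> Huv Hv.
have H0 : is_lim_seq (fun n => u n - l) 0.
  apply/is_lim_seq_abs_0; apply: (is_lim_seq_le_le (fun _ => 0) _ v) => //.
  - by move=> n; split; [apply: Rabs_pos | exact: Huv].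
  - exact: is_lim_seq_const.
have := is_lim_seq_plus' _ _ _ _ H0 (is_lim_seq_const l).
by rewrite Rplus_0_l; apply: is_lim_seq_ext => n; ring.
Qed.

Lemma is_lim_seq_ge_const (c : R) u (l : R) :
  eventually (fun n => c <= u n) -> is_lim_seq u l -> c <= l.
Proof. by move=> Hc; apply: (is_lim_seq_le_loc _ _ _ _ Hc (is_lim_seq_const c)). Qed.

Lemma is_lim_seq_le_const (c : R) u (l : R) :
  eventually (fun n => u n <= c) -> is_lim_seq u l -> l <= c.
Proof. by move=> Hc Hu; apply: (is_lim_seq_le_loc _ _ _ _ Hc Hu (is_lim_seq_const c)). Qed.

Lemma bounded_seq_cvg_subseq (u : nat -> R) M : (forall n, Rabs (u n) <= M) ->
  exists phi (l : R), strictly_increasing phi /\ is_lim_seq (fun n => u (phi n)) l.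
Proof.
move=> HM.
have [l Hl] := Bolzano_Weierstrass u (fun c => -M <= c <= M) (compact_P3 (-M) M)
  (fun n => proj1 (Rabs_le_between _ _) (HM n)).
have [phi [Hphi Hclose]] : exists phi, strictly_increasing phi /\
    forall n, Rabs (u (phi n) - l) < (/ 2) ^ n.
  apply: (strictly_increasing_choice (fun n k => Rabs (u k - l) < (/ 2) ^ n)) => n K.
  have Hpos : 0 < (/ 2) ^ n by apply: pow_lt; lra.
  have [k [HKk Hk]] := Hl (disc l (mkposreal _ Hpos)) K
    (ex_intro _ (mkposreal _ Hpos) (fun _ h => h)).
  by exists k; split => //; apply/leP.
exists phi, l; split => //.
apply: (is_lim_seq_of_dist_bound _ (fun n => (/ 2) ^ n)) => [n|].
- exact: Rlt_le (Hclose n).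
- by apply: is_lim_seq_geom; rewrite Rabs_pos_eq; lra.
Qed.

Lemma bounded_seqs_cvg_subseq (I : eqType) (u : I -> nat -> R) (r : seq I) :
  (forall i, exists M, forall n, Rabs (u i n) <= M) ->
  exists phi (l : I -> R), strictly_increasing phi /\
    forall i, i \in r -> is_lim_seq (fun n => u i (phi n)) (l i).
Proof.
move=> Hbd; elim: r => [|a r [phi [l [Hphi Hl]]]].
  by exists (fun n => n), (fun _ => 0); split.
have [M HM] := Hbd a.
have [psi [la [Hpsi Hla]]] := bounded_seq_cvg_subseq (fun n => u a (phi n)) M (fun n => HM _).
exists (fun n => phi (psi n)), (fun i => if i == a then la else l i).
split; first exact: strictly_increasing_comp.
move=> i; rewrite in_cons; case: eqP => [-> //|_ /= Hi].
exact: (is_lim_seq_subseq_incr _ _ _ Hpsi (Hl i Hi)).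
Qed.

Lemma big_Rplus_ge0 (I : Type) (r : seq I) (F : I -> R) :
  (forall i, 0 <= F i) -> 0 <= \big[Rplus/R0]_(i <- r) F i.
Proof. by move=> HF; apply: big_ind => // [|a b]; [lra | apply: Rplus_le_le_0_compat]. Qed.

Lemma big_Rplus_term_le (I : eqType) (r : seq I) (F : I -> R) i :
  (forall i, 0 <= F i) -> i \in r -> F i <= \big[Rplus/R0]_(j <- r) F j.
Proof.
move=> HF; elim: r => [|a r IH] //; rewrite big_cons in_cons => /orP [/eqP ->|Hi].
- by have := big_Rplus_ge0 _ r F HF; lra.
- by have := IH Hi; have := HF a; lra.
Qed.

Lemma is_lim_seq_big_Rplus (I : Type) (r : seq I) (F : I -> nat -> R) (l : I -> R) :
  (forall i, is_lim_seq (F i) (l i)) ->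
  is_lim_seq (fun n => \big[Rplus/R0]_(i <- r) F i n) (\big[Rplus/R0]_(i <- r) l i).
Proof.
move=> HF; elim: r => [|a r IH].
  by rewrite big_nil; apply: is_lim_seq_ext (is_lim_seq_const 0) => n; rewrite big_nil.
rewrite big_cons; apply: is_lim_seq_ext (is_lim_seq_plus' _ _ _ _ (HF a) IH) => n.
by rewrite big_cons.
Qed.

Lemma ex_derive_big_Rplus (I : Type) (r : seq I) (F : I -> R -> R) s :
  (forall i, ex_derive (F i) s) -> ex_derive (fun s => \big[Rplus/R0]_(i <- r) F i s) s.
Proof.
move=> HF; elim: r => [|a r IH].
  by apply: ex_derive_ext (ex_derive_const 0 s) => s'; rewrite big_nil.
by apply: ex_derive_ext (ex_derive_plus _ _ _ (HF a) IH) => s'; rewrite big_cons.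
Qed.

Lemma Cmod_sq (z : C) : Cmod z ^ 2 = fst z ^ 2 + snd z ^ 2.
Proof. by rewrite /Cmod pow2_sqrt //; nra. Qed.

Lemma cvnorm2_ge0 T (y : cvec T) : 0 <= cvnorm2 T y.
Proof. by apply: big_Rplus_ge0 => t; apply: pow2_ge_0. Qed.

Lemma Cmod_sq_le_cvnorm2 T (y : cvec T) t : Cmod (y t) ^ 2 <= cvnorm2 T y.
Proof.
apply: (big_Rplus_term_le _ _ (fun t => Cmod (y t) ^ 2)); last exact: mem_index_enum.
by move=> i; apply: pow2_ge_0.
Qed.

Lemma Rabs_le_sqrt a S : a ^ 2 <= S -> Rabs a <= sqrt S.
Proof. by move=> HS; rewrite -sqrt_Rsqr_abs; apply: sqrt_le_1_alt; rewrite /Rsqr; lra. Qed.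

Lemma Rabs_fst_le_znorm T (z : R * cvec T) : Rabs (fst z) <= znorm T z.
Proof. by apply: Rabs_le_sqrt; have := cvnorm2_ge0 T (snd z); lra. Qed.

Lemma Rabs_Re_le_znorm T (z : R * cvec T) t : Rabs (fst (snd z t)) <= znorm T z.
Proof.
apply: Rabs_le_sqrt; have := Cmod_sq_le_cvnorm2 T (snd z) t; rewrite Cmod_sq.
by have := pow2_ge_0 (fst z); have := pow2_ge_0 (snd (snd z t)); lra.
Qed.

Lemma Rabs_Im_le_znorm T (z : R * cvec T) t : Rabs (snd (snd z t)) <= znorm T z.
Proof.
apply: Rabs_le_sqrt; have := Cmod_sq_le_cvnorm2 T (snd z) t; rewrite Cmod_sq.
by have := pow2_ge_0 (fst z); have := pow2_ge_0 (fst (snd z t)); lra.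
Qed.

Definition cvec_cvg T (ys : nat -> cvec T) (yb : cvec T) :=
  forall t, is_lim_seq (fun n => fst (ys n t)) (fst (yb t)) /\
            is_lim_seq (fun n => snd (ys n t)) (snd (yb t)).

Lemma cvg_coordinates_of_znorm T (zs : nat -> R * cvec T) (zb : R * cvec T) :
  is_lim_seq (fun n => znorm T (zsub T (zs n) zb)) 0 ->
  is_lim_seq (fun n => fst (zs n)) (fst zb) /\ cvec_cvg T (fun n => snd (zs n)) (snd zb).
Proof.
move=> Hz; split; [|move=> t; split]; apply: is_lim_seq_of_dist_bound Hz => n.
- exact: (Rabs_fst_le_znorm T (zsub T (zs n) zb)).
- exact: (Rabs_Re_le_znorm T (zsub T (zs n) zb) t).
- exact: (Rabs_Im_le_znorm T (zsub T (zs n) zb) t).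
Qed.

Lemma is_lim_seq_pow2 u (l : R) : is_lim_seq u l -> is_lim_seq (fun n => u n ^ 2) (l ^ 2).
Proof. by move=> Hu; apply: is_lim_seq_mult' Hu (is_lim_seq_mult' _ _ _ _ Hu (is_lim_seq_const 1)). Qed.

Lemma is_lim_seq_sq_dist u (l : R) : is_lim_seq u l -> is_lim_seq (fun n => (u n - l) ^ 2) 0.
Proof.
move=> Hu; have := is_lim_seq_pow2 _ _ (is_lim_seq_minus' _ _ _ _ Hu (is_lim_seq_const l)).
by rewrite Rminus_diag /= Rmult_0_l.
Qed.

Lemma znorm_cvg0_of_coordinates T (zs : nat -> R * cvec T) (zb : R * cvec T) :
  is_lim_seq (fun n => fst (zs n)) (fst zb) -> cvec_cvg T (fun n => snd (zs n)) (snd zb) ->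
  is_lim_seq (fun n => znorm T (zsub T (zs n) zb)) 0.
Proof.
move=> Hx Hy.
have Hsq : is_lim_seq (fun n => (fst (zs n) - fst zb) ^ 2 +
    cvnorm2 T (fun t => Cminus (snd (zs n) t) (snd zb t))) (0 + \big[Rplus/R0]_(t < T) (0 + 0)).
  apply: is_lim_seq_plus'; first exact: is_lim_seq_sq_dist.
  apply: is_lim_seq_ext (is_lim_seq_big_Rplus _ _ (fun t n =>
      (fst (snd (zs n) t) - fst (snd zb t)) ^ 2 + (snd (snd (zs n) t) - snd (snd zb t)) ^ 2)
      (fun _ => 0 + 0) _) => [n|t].
  + by rewrite /cvnorm2; apply: eq_bigr => t _; rewrite Cmod_sq /=; ring.
  + by have [Hre Him] := Hy t; apply: is_lim_seq_plus'; exact: is_lim_seq_sq_dist.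
have Hzero : \big[Rplus/R0]_(t < T) (0 + 0) = 0.
  by apply: (big_ind (fun v => v = 0)) => [//|a b -> ->|t _]; rewrite Rplus_0_l.
rewrite Hzero Rplus_0_l in Hsq.
rewrite -sqrt_0.
exact: (is_lim_seq_continuous sqrt _ _ (continuity_pt_sqrt 0 (Rle_refl 0)) Hsq).
Qed.

Lemma bounded_zseq_cvg_subseq T (zs : nat -> R * cvec T) M :
  (forall n, znorm T (zs n) <= M) ->
  exists phi zb, strictly_increasing phi /\
    is_lim_seq (fun n => znorm T (zsub T (zs (phi n)) zb)) 0.
Proof.
move=> HM.
(* [None] is the real coordinate, [Some (t, true)] and [Some (t, false)] the
   real and imaginary parts of the [t]-th complex coordinate. *)
pose coord (o : option ('I_T * bool)) n := match o with
  | None => fst (zs n)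
  | Some (t, b) => if b then fst (snd (zs n) t) else snd (snd (zs n) t) end.
have Hbd : forall o, exists M, forall n, Rabs (coord o n) <= M.
  move=> [[t [|]]|]; exists M => n /=; apply: Rle_trans (HM n).
  - exact: Rabs_Re_le_znorm.
  - exact: Rabs_Im_le_znorm.
  - exact: Rabs_fst_le_znorm.
have [phi [l [Hphi Hl]]] := bounded_seqs_cvg_subseq _ coord (index_enum _) Hbd.
exists phi, (l None, fun t => (l (Some (t, true)), l (Some (t, false)))); split => //.
apply: znorm_cvg0_of_coordinates => [|t]; first exact: (Hl None (mem_index_enum _)).
by split; [exact: (Hl (Some (t, true)) (mem_index_enum _))
         | exact: (Hl (Some (t, false)) (mem_index_enum _))].
Qed.

Lemma omega_set_nonempty T (z : nat -> R * cvec T) M :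
  (forall k, znorm T (z k) <= M) -> exists zb, omega_set T z zb.
Proof. by move=> HM; have [phi [zb Hphi]] := bounded_zseq_cvg_subseq T z M HM; exists zb, phi. Qed.

Lemma zdist_le T (z : R * cvec T) (S : R * cvec T -> Prop) s :
  S s -> 0 <= real (zdist T z S) /\ real (zdist T z S) <= znorm T (zsub T z s).
Proof.
move=> Ss; rewrite /zdist.
set D := fun r => exists s, S s /\ r = znorm T (zsub T z s).
have [Hlb Hglb] := Glb_Rbar_correct D.
have Hge0 : Rbar_le 0 (Glb_Rbar D) by apply: Hglb => r [s' [_ ->]]; apply: sqrt_pos.
have Hle : Rbar_le (Glb_Rbar D) (znorm T (zsub T z s)) by apply: Hlb; exists s.
by move: Hge0 Hle; case: (Glb_Rbar D).
Qed.

Lemma zdist_omega_set_cvg0 T (z : nat -> R * cvec T) M :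
  (forall k, znorm T (z k) <= M) -> is_lim_seq (fun k => real (zdist T (z k) (omega_set T z))) 0.
Proof.
move=> HM; have [zb0 Hzb0] := omega_set_nonempty T z M HM.
apply/is_lim_seq_spec => eps; apply: NNPP => Hfar.
(* Otherwise a subsequence stays [eps]-far from [omega_set T z], and any of its limit
   points is a limit point of [z]. *)
have [psi [Hpsi Hpsi_far]] : exists psi, strictly_increasing psi /\
    forall n, eps <= real (zdist T (z (psi n)) (omega_set T z)).
  apply: (strictly_increasing_choice (fun _ k => eps <= real (zdist T (z k) (omega_set T z)))).
  move=> _ K; apply: NNPP => Hnear; apply: Hfar; exists K => k HKk.
  have [Hd0 _] := zdist_le T (z k) _ _ Hzb0.
  rewrite Rminus_0_r Rabs_pos_eq //; apply: Rnot_le_lt => Hle; apply: Hnear.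
  by exists k; split => //; apply/leP.
have [phi [zb [Hphi Hcvg]]] := bounded_zseq_cvg_subseq T (fun n => z (psi n)) M (fun n => HM _).
have Hzb : omega_set T z zb.
  by exists (fun n => psi (phi n)); split => //; apply: strictly_increasing_comp.
have : eps <= 0.
  apply: (is_lim_seq_le _ _ _ _ _ (is_lim_seq_const eps) Hcvg) => n.
  exact: Rle_trans (Hpsi_far (phi n)) (proj2 (zdist_le T _ _ _ Hzb)).
by have := cond_pos eps; lra.
Qed.

Lemma nonpos_of_derive_nonpos (g dg : R -> R) s :
  (forall t, is_derive g t (dg t)) -> (forall t, 0 <= t <= s -> dg t <= 0) ->
  g 0 = 0 -> 0 <= s -> g s <= 0.
Proof.
move=> Hg Hdg Hg0 Hs.
have [c [Hc Hmvt]] := MVT_gen g 0 s dg (fun t _ => Hg t)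
  (fun t _ => proj2 (continuity_pt_filterlim g t) (ex_derive_continuous g t (ex_intro _ _ (Hg t)))).
move: Hc; rewrite Rmin_left // Rmax_right // => Hc.
by have := Hdg c Hc; nra.
Qed.

Lemma is_derive_eq_ext (f g : R -> R) x l l' :
  (forall t, f t = g t) -> l = l' -> is_derive f x l -> is_derive g x l'.
Proof. by move=> Hfg <-; apply: is_derive_ext. Qed.

Lemma is_derive_shift (f df : R -> R) x t :
  is_derive f (x + t) (df (x + t)) -> is_derive (fun t => f (x + t)) t (df (x + t)).
Proof.
move=> Hf; have Hx : is_derive (fun t => x + t) t 1 by auto_derive => //; ring.
by have := is_derive_comp f (fun t => x + t) t _ _ Hf Hx; rewrite scal_one.
Qed.

Section CubicTaylor.

Variables (f f1 f2 : R -> R) (L : R).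
Hypothesis f_f1 : forall t, is_derive f t (f1 t).
Hypothesis f1_f2 : forall t, is_derive f1 t (f2 t).
Hypothesis f2_lipschitz : forall t u, Rabs (f2 t - f2 u) <= L * Rabs (t - u).

Lemma cubic_taylor_upper_nonneg x s : 0 <= s ->
  f (x + s) - (f x + f1 x * s + / 2 * f2 x * s ^ 2) <= L / 6 * s ^ 3.
Proof.
move=> Hs.
pose r1 t := f1 (x + t) - (f1 x + f2 x * t) - L / 2 * t ^ 2.
pose r0 t := f (x + t) - (f x + f1 x * t + / 2 * f2 x * t ^ 2) - L / 6 * t ^ 3.
have Hr1 : forall t, is_derive r1 t (f2 (x + t) - f2 x - L * t).
  move=> t; have Hp : is_derive (fun t => (f1 x + f2 x * t) + L / 2 * t ^ 2) t (f2 x + L * t).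
    by auto_derive => //; field.
  have := is_derive_minus _ _ _ _ _ (is_derive_shift _ _ x t (f1_f2 _)) Hp.
  by apply: is_derive_eq_ext => [u|]; rewrite /r1 /minus /plus /opp /=; ring.
have Hr0 : forall t, is_derive r0 t (r1 t).
  move=> t; have Hp : is_derive (fun t => (f x + f1 x * t + / 2 * f2 x * t ^ 2) + L / 6 * t ^ 3) t
      (f1 x + f2 x * t + L / 2 * t ^ 2) by auto_derive => //; field.
  have := is_derive_minus _ _ _ _ _ (is_derive_shift _ _ x t (f_f1 _)) Hp.
  by apply: is_derive_eq_ext => [u|]; rewrite /r0 /r1 /minus /plus /opp /=; ring.
have Hr1_le0 : forall t, 0 <= t -> r1 t <= 0.
  move=> t Ht; apply: (nonpos_of_derive_nonpos _ _ _ Hr1) => // [u Hu|].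
  - have := f2_lipschitz (x + u) x; rewrite (_ : x + u - x = u); last ring.
    by rewrite (Rabs_pos_eq u); [move=> /Rabs_le_between; lra | lra].
  - by rewrite /r1 Rplus_0_r; ring.
have : r0 s <= 0.
  apply: (nonpos_of_derive_nonpos _ _ _ Hr0) => // [u Hu|]; first by apply: Hr1_le0; lra.
  by rewrite /r0 Rplus_0_r; ring.
by rewrite /r0; lra.
Qed.

End CubicTaylor.

Lemma cubic_taylor_upper (f f1 f2 : R -> R) L :
  (forall t, is_derive f t (f1 t)) -> (forall t, is_derive f1 t (f2 t)) ->
  (forall t u, Rabs (f2 t - f2 u) <= L * Rabs (t - u)) ->
  forall x s, f (x + s) - (f x + f1 x * s + / 2 * f2 x * s ^ 2) <= L / 6 * Rabs s ^ 3.
Proof.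
move=> Hf Hf1 HL x s; case: (Rle_lt_dec 0 s) => Hs.
  by rewrite Rabs_pos_eq //; exact: cubic_taylor_upper_nonneg.
(* For [s < 0], apply the nonnegative case to [t |-> f (- t)]. *)
have Hg : forall t, is_derive (fun t => f (- t)) t (- f1 (- t)).
  move=> t; have Hm : is_derive (fun t => - t) t (-1) by auto_derive => //; ring.
  have := is_derive_comp f (fun t => - t) t _ _ (Hf (- t)) Hm.
  by apply: is_derive_eq_ext => //; rewrite /scal /= /mult /=; ring.
have Hg1 : forall t, is_derive (fun t => - f1 (- t)) t (f2 (- t)).
  move=> t; have Hm : is_derive (fun t => - t) t (-1) by auto_derive => //; ring.
  have := is_derive_opp _ _ _ (is_derive_comp f1 (fun t => - t) t _ _ (Hf1 (- t)) Hm).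
  by apply: is_derive_eq_ext => //; rewrite /opp /scal /= /mult /=; ring.
have HgL : forall t u, Rabs (f2 (- t) - f2 (- u)) <= L * Rabs (t - u).
  move=> t u; have := HL (- t) (- u).
  by rewrite (_ : - t - - u = - (t - u)) ?Rabs_Ropp; last ring.
have := cubic_taylor_upper_nonneg _ _ _ L Hg Hg1 HgL (- x) (- s) ltac:(lra).
rewrite (_ : - (- x + - s) = x + s) ?Ropp_involutive; last ring.
rewrite Rabs_left // (_ : (- s) ^ 2 = s ^ 2); last ring.
by rewrite (_ : - f1 x * - s = f1 x * s); last ring.
Qed.

Lemma cubic_taylor (f f1 f2 : R -> R) L :
  (forall t, is_derive f t (f1 t)) -> (forall t, is_derive f1 t (f2 t)) ->
  (forall t u, Rabs (f2 t - f2 u) <= L * Rabs (t - u)) ->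
  forall x s, Rabs (f (x + s) - (f x + f1 x * s + / 2 * f2 x * s ^ 2)) <= L / 6 * Rabs s ^ 3.
Proof.
move=> Hf Hf1 HL x s; apply/Rabs_le_between; split; last exact: cubic_taylor_upper.
have HL' : forall t u, Rabs (- f2 t - - f2 u) <= L * Rabs (t - u).
  by move=> t u; rewrite (_ : - f2 t - - f2 u = - (f2 t - f2 u)) ?Rabs_Ropp; last ring.
have := cubic_taylor_upper (fun t => - f t) (fun t => - f1 t) (fun t => - f2 t) L
  (fun t => is_derive_opp _ _ _ (Hf t)) (fun t => is_derive_opp _ _ _ (Hf1 t)) HL' x s.
by rewrite /=; lra.
Qed.

Lemma Derive_eq0_of_cubic_min (f : R -> R) x0 C :
  ex_derive f x0 -> (forall s, f x0 <= f (x0 + s) + C * Rabs s ^ 3) -> Derive f x0 = 0.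
Proof.
move=> Hf Hmin.
(* Near [x0], [C |s|^3 <= |C| s^2], so [x0] is a local minimum of [f + |C| (. - x0)^2]. *)
pose g t := f t + Rabs C * (t - x0) ^ 2.
have Hq : ex_derive (fun t => Rabs C * (t - x0) ^ 2) x0 by auto_derive.
have Hg : ex_derive g x0 by apply: ex_derive_plus.
have <- : Derive g x0 = Derive f x0.
  rewrite /g Derive_plus // (_ : Derive (fun t => Rabs C * (t - x0) ^ 2) x0 = 0); first ring.
  by apply: is_derive_unique; auto_derive => //; ring.
rewrite -(Derive_Reals _ _ (ex_derive_Reals_0 _ _ Hg)).
apply: (deriv_minimum _ (x0 - 1) (x0 + 1)); try lra.
move=> t Ht1 Ht2; have := Hmin (t - x0); rewrite /g (_ : x0 + (t - x0) = t); last ring.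
have Hs : Rabs (t - x0) < 1 by apply: Rabs_def1; lra.
have : C * Rabs (t - x0) ^ 3 <= Rabs C * (t - x0) ^ 2.
  rewrite -(pow2_abs (t - x0)) (_ : forall a, C * a ^ 3 = (C * a) * a ^ 2) => [|a]; last ring.
  apply: Rmult_le_compat_r; first exact: pow2_ge_0.
  have := Rabs_pos (t - x0); have := Rle_abs C; have := Rabs_pos C; nra.
by rewrite Rminus_diag /= Rmult_0_l Rmult_0_r Rplus_0_r; lra.
Qed.

Lemma Hfun_term N (e : C) n x (w : C) :
  Cmod (Cminus e (Cmult (steer N x n) (Cconj w))) ^ 2 =
  (fst e - (cos (INR n * x) / sqrt (INR N) * fst w + sin (INR n * x) / sqrt (INR N) * snd w)) ^ 2
  + (snd e - (sin (INR n * x) / sqrt (INR N) * fst w - cos (INR n * x) / sqrt (INR N) * snd w)) ^ 2.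
Proof. by rewrite Cmod_sq /Cminus /Cplus /Copp /Cmult /Cconj /steer /=; ring. Qed.

Lemma is_lim_seq_comp_ex_derive (g : R -> R) u l :
  ex_derive g l -> is_lim_seq u l -> is_lim_seq (fun n => g (u n)) (g l).
Proof.
move=> Hg; apply: is_lim_seq_continuous.
exact/continuity_pt_filterlim/ex_derive_continuous.
Qed.

Lemma is_lim_seq_Hfun N T E xs (ys : nat -> cvec T) (xb : R) (yb : cvec T) :
  is_lim_seq xs xb -> cvec_cvg T ys yb ->
  is_lim_seq (fun n => Hfun N T E (xs n) (ys n)) (Hfun N T E xb yb).
Proof.
move=> Hx Hy; apply: is_lim_seq_big_Rplus => n; apply: is_lim_seq_big_Rplus => t.
have [Hre Him] := Hy t.
have Hcos := is_lim_seq_comp_ex_derive (fun x => cos (INR n * x) / sqrt (INR N)) _ _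
  ltac:(by auto_derive) Hx.
have Hsin := is_lim_seq_comp_ex_derive (fun x => sin (INR n * x) / sqrt (INR N)) _ _
  ltac:(by auto_derive) Hx.
rewrite Hfun_term; apply: is_lim_seq_ext => [k|]; first by rewrite Hfun_term.
by apply: is_lim_seq_plus'; apply: is_lim_seq_pow2; apply: is_lim_seq_minus';
  [ exact: is_lim_seq_const | apply: is_lim_seq_plus' | exact: is_lim_seq_const
  | apply: is_lim_seq_minus' ]; apply: is_lim_seq_mult'.
Qed.

Lemma ex_derive_Hfun_cvupd N T E x (y : cvec T) t (u v : R -> R) s :
  ex_derive u s -> ex_derive v s ->
  ex_derive (fun s => Hfun N T E x (cvupd T y t (u s, v s))) s.
Proof.
move=> Hu Hv; apply: ex_derive_big_Rplus => n; apply: ex_derive_big_Rplus => t'.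
rewrite /cvupd; case: (t' == t); last exact: ex_derive_const.
apply: ex_derive_ext => [s'|]; first by rewrite Hfun_term.
by rewrite /Cplus /=; auto_derive; repeat split.
Qed.

Lemma cvupd0 T (y : cvec T) t : cvupd T y t (0, 0) = y.
Proof.
apply: functional_extensionality => t'; rewrite /cvupd; case: (t' == t) => //.
by case: (y t') => a b; rewrite /Cplus /= !Rplus_0_r.
Qed.

Lemma wirt_grad_eq0_of_min N T E x (y : cvec T) :
  (forall w, Hfun N T E x y <= Hfun N T E x w) -> forall t, wirt_grad N T E x y t = RtoC 0.
Proof.
move=> Hmin t.
have Hpartial : forall u v : R -> R, u 0 = 0 -> v 0 = 0 ->
    ex_derive u 0 -> ex_derive v 0 ->
    Derive (fun s => Hfun N T E x (cvupd T y t (u s, v s))) 0 = 0.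
  move=> u v Hu0 Hv0 Hu Hv; apply: (Derive_eq0_of_cubic_min _ _ 0).
    exact: ex_derive_Hfun_cvupd.
  by move=> s; rewrite Hu0 Hv0 cvupd0 Rmult_0_l Rplus_0_r.
rewrite /wirt_grad /RtoC.
have Hre : Derive (fun s => Hfun N T E x (cvupd T y t (s, 0))) 0 = 0.
  by apply: (Hpartial (fun s => s) (fun _ => 0)) => //; auto_derive.
have Him : Derive (fun s => Hfun N T E x (cvupd T y t (0, s))) 0 = 0.
  by apply: (Hpartial (fun _ => 0) (fun s => s)) => //; auto_derive.
by rewrite Hre Him Rmult_0_r.
Qed.

Section CubicAlternatingScheme.

Variables (N T : nat) (E : 'I_N -> 'I_T -> C) (L : cvec T -> R) (lp : R).
Variables (x : nat -> R) (y : nat -> cvec T).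

Local Notation H := (Hfun N T E).
Local Notation z := (fun k => (x k, y k)).

Hypothesis H_derivable : forall w s, ex_derive (fun s' => H s' w) s.
Hypothesis dxH_derivable : forall w s, ex_derive (fun s' => dxH N T E s' w) s.
Hypothesis dxxH_lipschitz :
  forall w s1 s2, Rabs (dxxH N T E s1 w - dxxH N T E s2 w) <= L w * Rabs (s1 - s2).
Hypothesis L_le : forall k, L (y k) <= lp.
Hypothesis x_update : forall k u, xi N T E L (x k) (y k) (x k.+1) <= xi N T E L (x k) (y k) u.
Hypothesis y_update : forall k w, H (x k.+1) (y k.+1) <= H (x k.+1) w.

(* The cubic model overestimates the Taylor remainder, so one step is never worse than
   the step [s] from [x k] plus the cubic penalty of the model and of the remainder. *)
Lemma Hfun_descent k s : H (x k.+1) (y k.+1) <= H (x k + s) (y k) + lp / 3 * Rabs s ^ 3.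
Proof.
have Htaylor := cubic_taylor (fun s => H s (y k)) (fun s => dxH N T E s (y k))
  (fun s => dxxH N T E s (y k)) (L (y k)) (fun t => Derive_correct _ _ (H_derivable _ t))
  (fun t => Derive_correct _ _ (dxH_derivable _ t)) (dxxH_lipschitz _) (x k).
have /Rabs_le_between Hstep := Htaylor (x k.+1 - x k).
have /Rabs_le_between Hs := Htaylor s.
rewrite (_ : x k + (x k.+1 - x k) = x k.+1) in Hstep; last ring.
have := x_update k (x k + s); rewrite /xi (_ : x k + s - x k = s); last ring.
have := y_update k (y k).
have : L (y k) * Rabs s ^ 3 <= lp * Rabs s ^ 3.
  by apply: Rmult_le_compat_r (L_le k); apply: pow_le; apply: Rabs_pos.
by lra.
Qed.

Lemma Hfun_nonincreasing m n : (m <= n)%nat -> H (x n) (y n) <= H (x m) (y m).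
Proof.
move=> Hmn; apply: Rge_le; apply: (homo_leq (f := fun k => H (x k) (y k)) (r := Rge)) Hmn.
- exact: Rge_refl.
- by move=> b a c Hab Hbc; apply: Rge_trans Hab Hbc.
- by move=> k; apply: Rle_ge; have := Hfun_descent k 0; rewrite Rplus_0_r Rabs_R0 /=; lra.
Qed.

Section LimitPoint.

Variables (xb : R) (yb : cvec T) (k : nat -> nat).
Hypothesis k_incr : strictly_increasing k.
Hypothesis z_cvg : is_lim_seq (fun l => znorm T (zsub T (z (k l)) (xb, yb))) 0.

Let x_cvg : is_lim_seq (fun l => x (k l)) xb := proj1 (cvg_coordinates_of_znorm T _ _ z_cvg).
Let y_cvg : cvec_cvg T (fun l => y (k l)) yb := proj2 (cvg_coordinates_of_znorm T _ _ z_cvg).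

Lemma limit_point_Hfun_le m : H xb yb <= H (x m) (y m).
Proof.
apply: (is_lim_seq_le_const _ (fun l => H (x (k l)) (y (k l)))); last exact: (is_lim_seq_Hfun N T E _ _ _ _ x_cvg y_cvg).
exists m => l /leP Hml; apply: Hfun_nonincreasing.
exact: leq_trans Hml (strictly_increasing_ge _ k_incr l).
Qed.

Lemma limit_point_dxH_eq0 : dxH N T E xb yb = 0.
Proof.
apply: (Derive_eq0_of_cubic_min _ _ (lp / 3) (H_derivable _ _)) => s.
apply: (is_lim_seq_ge_const _ (fun l => H (x (k l) + s) (y (k l)) + lp / 3 * Rabs s ^ 3)).
  by exists 0%nat => l _; apply: Rle_trans (limit_point_Hfun_le (k l).+1) (Hfun_descent _ _).
apply: is_lim_seq_plus' (is_lim_seq_const _); apply: (is_lim_seq_Hfun N T E _ _ _ _ _ y_cvg).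
exact: is_lim_seq_plus' x_cvg (is_lim_seq_const s).
Qed.

Lemma limit_point_argmin_y w : H xb yb <= H xb w.
Proof.
apply: (is_lim_seq_ge_const _ (fun l => H (x (k l)) w)); last first.
  by apply: (is_lim_seq_Hfun N T E _ _ _ _ x_cvg) => t; split; apply: is_lim_seq_const.
exists 1%nat => l /leP Hl; apply: Rle_trans (limit_point_Hfun_le (k l)) _.
have : (0 < k l)%nat by apply: leq_trans Hl (strictly_increasing_ge _ k_incr l).
by case: (k l) => [//|j] _; apply: y_update.
Qed.

End LimitPoint.

Lemma omega_set_critH zb : omega_set T z zb -> critH N T E zb.
Proof.
case: zb => xb yb [k [k_incr z_cvg]]; split.
- exact: (limit_point_dxH_eq0 _ _ _ k_incr z_cvg).
- by apply: wirt_grad_eq0_of_min; apply: (limit_point_argmin_y _ _ _ k_incr z_cvg).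
Qed.

End CubicAlternatingScheme.

Theorem theorem1 (N T : nat) (E : 'I_N -> 'I_T -> C) (L : cvec T -> R)
  (x : nat -> R) (y : nat -> cvec T) :
  (1 <= N)%nat -> (1 <= T)%nat ->
  (forall w, 0 < L w) ->
  (* Assumption A (i) *)
  (exists m, forall s w, m <= Hfun N T E s w) ->
  (* Assumption A (ii) *)
  (forall w s, ex_derive (fun s' => Hfun N T E s' w) s) ->
  (forall w s, ex_derive (fun s' => dxH N T E s' w) s) ->
  (forall w s, continuous (fun s' => dxxH N T E s' w) s) ->
  (forall w s1 s2, Rabs (dxxH N T E s1 w - dxxH N T E s2 w) <= L w * Rabs (s1 - s2)) ->
  (* Assumption A (iii) *)
  (exists nu, 0 < nu /\ forall s,
      convex_cv T (fun w => Hfun N T E s w - nu / 2 * cvnorm2 T w)) ->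
  (* Assumption A (iv) *)
  (exists lm lp, 0 < lm /\ lm <= lp /\ forall k, lm <= L (y k) <= lp) ->
  (* the cubic-regularized alternating scheme *)
  (forall k u, xi N T E L (x k) (y k) (x (S k)) <= xi N T E L (x k) (y k) u) ->
  (forall k w, Hfun N T E (x (S k)) (y (S k)) <= Hfun N T E (x (S k)) w) ->
  (* boundedness of the sequence *)
  (exists M, forall k, znorm T (x k, y k) <= M) ->
  (exists zb, omega_set T (fun k => (x k, y k)) zb) /\
  (forall zb, omega_set T (fun k => (x k, y k)) zb -> critH N T E zb) /\
  is_lim_seq (fun k => real (zdist T (x k, y k) (omega_set T (fun k => (x k, y k))))) 0.
Proof.
move=> _ _ _ _ H_derivable dxH_derivable _ dxxH_lipschitz _ [lm [lp [_ [_ L_bounds]]]]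
  x_update y_update [M z_bounded].
split; first exact: omega_set_nonempty z_bounded.
split; last exact: zdist_omega_set_cvg0 z_bounded.
apply: (omega_set_critH N T E L lp) => // k.
exact: proj2 (L_bounds k).
Qed.
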